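(* Let $G$ be a graph containing no cycle of length 6, let $x\in V(G)$, and let $A$ be a connected component of $G[N_2(x)]$ which contains an odd cycle. Then $|N(x)\cap N(V(A))|=1$.
   Context: All graphs are finite, simple and undirected; ''containing no cycle of length 6'' means having no subgraph (not necessarily induced) isomorphic to $C_6$. $N_i(S)$ denotes the set of vertices at distance exactly $i$ from the vertex set $S$, $N(S)=N_1(S)$, $N(v)=N(\{v\})$, $N_2(v)=N_2(\{v\})$. *)

From mathcomp Require Import all_boot.
Set Implicit Arguments. Unset Strict Implicit. Unset Printing Implicit Defensive.

Section Graph.
Variables (T : finType) (e : rel T).

Definition simple_graph : Prop := symmetric e /\ irreflexive e.

Definition has_cycle_len (k : nat) : Prop :=
  exists s : seq T, [/\ size s = k, uniq s & cycle e s].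

Definition C6_free : Prop := ~ has_cycle_len 6.

Definition N1 (v : T) : {set T} := [set y | e v y].

Definition N2 (v : T) : {set T} :=
  [set y | [&& y != v, ~~ e v y & [exists z, e v z && e z y]]].

Definition NS (S : {set T}) : {set T} :=
  [set y | (y \notin S) && [exists a in S, e a y]].

Definition induced (S : {set T}) : rel T :=
  [rel u v | [&& e u v, u \in S & v \in S]].

Definition is_component (S A : {set T}) : Prop :=
  exists2 a, a \in S & A = [set y in S | connect (induced S) a y].

Definition has_odd_cycle_in (A : {set T}) : Prop :=
  exists s : seq T,
    [/\ 3 <= size s, odd (size s), uniq s, cycle e s & all (mem A) s].

End Graph.

(* If a-b-c is a path in G[N_2(x)] with a != c, and y, z are common
   neighbours of x with a and c respectively, then y != z would give the
   6-cycle x y a b c z.  Hence the set of common neighbours of x and v is the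
   same for v and for every vertex two steps away from v; along an odd cycle
   this makes it equal at the two ends of an edge, and from there it spreads
   over the whole component.  By the same 6-cycle argument applied to two
   distinct cycle vertices at distance two, this common set is a single
   vertex, and it is exactly N(x) ∩ N(V(A)). *)
From mathcomp Require Import all_boot.
Set Implicit Arguments. Unset Strict Implicit. Unset Printing Implicit Defensive.

Section StepTwoInvariant.
Variables (T : finType) (r : rel T) (U : Type) (F : T -> U).
Hypothesis F_step2 : forall a b c, r a b -> r b c -> F a = F c.

Lemma path_step2 a b p : r a b -> path r b p ->
  F (last b p) = if odd (size p) then F a else F b.
Proof.
elim: p a b => [//|c p IHp] a b rab /= /andP [rbc pc].
rewrite (IHp b c rbc pc) (F_step2 rab rbc).
by case: (odd (size p)).
Qed.

Lemma odd_cycle_step2 a b p : cycle r [:: a, b & p] -> odd (size p) -> F a = F b.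
Proof.
move=> /= /andP [rab pb] odd_p.
by have := path_step2 rab pb; rewrite last_rcons size_rcons /= odd_p.
Qed.

Lemma connect_step2 a b v : r a b -> F a = F b -> connect r b v -> F v = F b.
Proof.
move=> rab Fab /connectP [p pb ->].
by rewrite (path_step2 rab pb) Fab if_same.
Qed.

End StepTwoInvariant.

Section InducedSubgraphs.
Variables (T : finType) (e : rel T).
Hypothesis e_sym : symmetric e.

Lemma induced_sym (S : {set T}) : symmetric (induced e S).
Proof. by move=> u v; rewrite /induced /= (e_sym u v) [(u \in _) && _]andbC. Qed.

Lemma induced_cycle (S : {set T}) s : all (mem S) s -> cycle e s -> cycle (induced e S) s.
Proof. by apply: sub_in_cycle => u v Su Sv euv; rewrite /induced /= euv Su Sv. Qed.

Lemma component_sub S A : is_component e S A -> A \subset S.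
Proof. by move=> [a _ ->]; apply/subsetP => v; rewrite inE => /andP []. Qed.

Lemma component_connect S A u v : is_component e S A ->
  u \in A -> v \in A -> connect (induced e S) u v.
Proof.
move=> [a _ ->]; rewrite !inE => /andP [_ au] /andP [_ av].
by apply: connect_trans av; rewrite (sym_connect_sym (induced_sym S)).
Qed.

End InducedSubgraphs.

Section CommonNeighbours.
Variables (T : finType) (e : rel T).
Hypotheses (e_sym : symmetric e) (e_irr : irreflexive e) (noC6 : C6_free e).
Variable x : T.

Definition common_nbrs (v : T) : {set T} := N1 e x :&: N1 e v.

Local Notation GN2 := (induced e (N2 e x)).

Lemma adj_neq u v : e u v -> u != v.
Proof. by apply: contraTneq => ->; rewrite e_irr. Qed.

Lemma N2_neq v : v \in N2 e x -> x != v.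
Proof. by rewrite inE eq_sym => /andP []. Qed.

Lemma N1_N2_neq u v : e x u -> v \in N2 e x -> u != v.
Proof. by move=> exu; rewrite inE => /and3P [_ nexv _]; apply: contraNneq nexv => <-. Qed.

Lemma common_nbrs_nonempty v : v \in N2 e x -> exists y, y \in common_nbrs v.
Proof.
rewrite inE => /and3P [_ _ /existsP [y /andP [exy eyv]]].
by exists y; rewrite !inE exy e_sym.
Qed.

Lemma common_nbr_eq a b c y z : GN2 a b -> GN2 b c -> a != c ->
  y \in common_nbrs a -> z \in common_nbrs c -> y = z.
Proof.
move=> /and3P [eab Na Nb] /and3P [ebc _ Nc] neq_ac.
rewrite !inE => /andP [exy eay] /andP [exz ecz].
have [// | neq_yz] := eqVneq y z; case: noC6.
exists [:: x; y; a; b; c; z]; split => //=; last first.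
  by rewrite exy (e_sym y) eay eab ebc ecz (e_sym z) exz.
rewrite !inE !negb_or (adj_neq exy) (adj_neq exz) !N2_neq //=.
rewrite neq_yz neq_ac (adj_neq eab) (adj_neq ebc) ![_ == z]eq_sym.
by rewrite !N1_N2_neq.
Qed.

Lemma common_nbrs_step2 a b c : GN2 a b -> GN2 b c -> common_nbrs a = common_nbrs c.
Proof.
move=> Gab Gbc; have [-> // | neq_ac] := eqVneq a c.
have /and3P [_ Na _] := Gab; have /and3P [_ _ Nc] := Gbc.
have [z cz] := common_nbrs_nonempty Nc; have [y ay] := common_nbrs_nonempty Na.
apply/setP => w; apply/idP/idP => hw.
  by rewrite (common_nbr_eq Gab Gbc neq_ac hw cz).
by rewrite -(common_nbr_eq Gab Gbc neq_ac ay hw).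
Qed.

Lemma card_common_nbrs a b c : GN2 a b -> GN2 b c -> a != c ->
  #|common_nbrs a| = 1.
Proof.
move=> Gab Gbc neq_ac; have /and3P [_ Na _] := Gab.
have [y ay] := common_nbrs_nonempty Na.
apply/eqP/cards1P; exists y; apply/setP => z; rewrite inE.
apply/idP/eqP => [az | -> //].
by apply/esym/(common_nbr_eq Gab Gbc neq_ac ay); rewrite -(common_nbrs_step2 Gab Gbc).
Qed.

Lemma N1_NS_common_nbrs (A : {set T}) a :
  A \subset N2 e x -> a \in A -> {in A, forall v, common_nbrs v = common_nbrs a} ->
  N1 e x :&: NS e A = common_nbrs a.
Proof.
move=> /subsetP AN2 aA cnA; apply/setP => y; rewrite !inE.
apply/idP/idP => [/and3P [exy _ /existsP [v /andP [vA evy]]] | /andP [exy eay]].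
  by have := cnA v vA; move/setP/(_ y); rewrite !inE exy evy.
rewrite exy /=; apply/andP; split; last by apply/existsP; exists a; rewrite aA eay.
by apply: contraL exy => /AN2; rewrite inE => /and3P [].
Qed.

End CommonNeighbours.

Theorem lemma2p3 (T : finType) (e : rel T) (x : T) (A : {set T}) :
  simple_graph e -> C6_free e ->
  is_component e (N2 e x) A -> has_odd_cycle_in e A ->
  #|N1 e x :&: NS e A| = 1.
Proof.
move=> [e_sym e_irr] noC6 compA [s [size_s odd_s uniq_s cycle_s sA]].
have AN2 := component_sub compA.
have := induced_cycle (sub_all (subsetP AN2) sA) cycle_s.
case: s {cycle_s} size_s odd_s uniq_s sA => [|a [|b [|c p]]] // _.
move=> odd_abc uniq_abc sA cycle_abc.
have odd_p : odd (size (c :: p)) by move: odd_abc => /=; rewrite !negbK.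
have neq_ac : a != c by apply: contraTneq uniq_abc => ->; rewrite /= !inE eqxx orbT.
have bA : b \in A by apply: (allP sA); rewrite !inE eqxx orbT.
have /and3P [Gab Gbc _] := cycle_abc.
have step2 := common_nbrs_step2 e_sym e_irr noC6 (x := x).
have Fab := odd_cycle_step2 step2 cycle_abc odd_p.
have cnA : {in A, forall v, common_nbrs e x v = common_nbrs e x b}.
  by move=> v vA; apply: (connect_step2 step2 Gab Fab (component_connect e_sym compA bA vA)).
rewrite (N1_NS_common_nbrs AN2 bA cnA) -Fab.
exact: (card_common_nbrs e_sym e_irr noC6 Gab Gbc neq_ac).
Qed.
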